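(* Let $\underline{E}=(E_p)_{p\in\mathbb{P}}$ be a family with $E_p\subseteq\overline{\mathbb{Z}_p}$ for every prime $p$, and let $R=\textnormal{Int}_{\mathbb{Q}}(\underline{E},\overline{\widehat{\mathbb{Z}}})$. Let $P$ be a finite set of primes and let $S$ be the multiplicative subset of $\mathbb{Z}$ generated by $\mathbb{P}\setminus P$. Then $$S^{-1}R=\bigcap_{p\in P}\textnormal{Int}_{\mathbb{Q}}(E_p,\overline{\mathbb{Z}_p}).$$ In particular, for each prime $p$, $(\mathbb{Z}\setminus p\mathbb{Z})^{-1}R=\textnormal{Int}_{\mathbb{Q}}(E_p,\overline{\mathbb{Z}_p})$.
   Context: $\mathbb{P}$ is the set of prime numbers. For a prime $p$, $\mathbb{Z}_p$ is the ring of $p$-adic integers, $\overline{\mathbb{Q}_p}$ a fixed algebraic closure of $\mathbb{Q}_p$, $\overline{\mathbb{Z}_p}$ the integral closure of $\mathbb{Z}_p$ in $\overline{\mathbb{Q}_p}$, and $v_p$ the unique extension of the $p$-adic valuation to $\overline{\mathbb{Q}_p}$. For $E_p\subseteq\overline{\mathbb{Z}_p}$, $\textnormal{Int}_{\mathbb{Q}}(E_p,\overline{\mathbb{Z}_p})=\{f\in\mathbb{Q}[X]\mid f(\alpha)\in\overline{\mathbb{Z}_p}\ \forall\alpha\in E_p\}$ (this is $\mathbb{Q}[X]$ if $E_p=\emptyset$). For a family $\underline{E}=(E_p)_p$ (written $\prod_pE_p\subseteq\overline{\widehat{\mathbb{Z}}}=\prod_p\overline{\mathbb{Z}_p}$;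 components may be empty), $\textnormal{Int}_{\mathbb{Q}}(\underline{E},\overline{\widehat{\mathbb{Z}}})=\bigcap_{p\in\mathbb{P}}\textnormal{Int}_{\mathbb{Q}}(E_p,\overline{\mathbb{Z}_p})$, i.e. the polynomials $f\in\mathbb{Q}[X]$ with $f(\alpha_p)\in\overline{\mathbb{Z}_p}$ for all $p$ and all $\alpha_p\in E_p$. *)

From HB Require Import structures.
From mathcomp Require Import all_boot all_order all_algebra.
Set Implicit Arguments. Unset Strict Implicit. Unset Printing Implicit Defensive.
Import Order.TTheory GRing.Theory Num.Theory.
Local Open Scope ring_scope.

Definition padic_val (p : nat) (q : rat) : int :=
  (logn p (absz (numq q)))%:Z - (logn p (absz (denq q)))%:Z.

(* Abstract model of (Qbar_p, v_p): an algebraically closed field K of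
   characteristic 0 with a rational-valued valuation v (given on K^x; the
   value at 0 (= +oo) is irrelevant) extending the p-adic valuation of Q,
   where Q is embedded into K by ratr. *)
Definition is_padic_closure (p : nat) (K : closedFieldType) (v : K -> rat) :=
  [/\ [pchar K] =i pred0,
      forall x y : K, x != 0 -> y != 0 -> v (x * y) = v x + v y,
      forall x y : K, x != 0 -> y != 0 -> x + y != 0 ->
         Num.min (v x) (v y) <= v (x + y)
    & forall q : rat, q != 0 -> v (ratr q) = (padic_val p q)%:~R ].

Definition Zbar (K : closedFieldType) (v : K -> rat) (x : K) : Prop :=
  x = 0 \/ 0 <= v x.

Definition IntQ (K : closedFieldType) (v : K -> rat) (E : K -> Prop)
  (f : {poly rat}) : Prop :=
  forall a : K, E a -> Zbar v (map_poly ratr f).[a].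

(* Int_Q(E, Zhatbar) = intersection over all primes p of Int_Q(E_p, Zbar_p) *)
Definition IntQhat (K : nat -> closedFieldType) (v : forall p, K p -> rat)
  (E : forall p, K p -> Prop) (f : {poly rat}) : Prop :=
  forall p : nat, prime p -> IntQ (v p) (E p) f.

Definition genS (P : seq nat) (s : int) : Prop :=
  exists l : seq nat, all (fun q => prime q && (q \notin P)) l /\
    s = (\prod_(q <- l) q)%:Z.

Definition localize (S : int -> Prop) (A : {poly rat} -> Prop)
  (f : {poly rat}) : Prop :=
  exists s : int, exists g : {poly rat},
    [/\ S s, A g & f = (s%:~R)^-1 *: g].

From HB Require Import structures.
From mathcomp Require Import all_boot all_order all_algebra.
Set Implicit Arguments. Unset Strict Implicit. Unset Printing Implicit Defensive.
Import Order.TTheory GRing.Theory Num.Theory.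
Local Open Scope ring_scope.

(* Multiplying by an integer preserves p-integrality, and so does dividing by
   an integer s with p not dividing s, because then v_p(s) = 0.  Hence
   S^-1 R lies in Int_Q(E_p, Zbar_p) for every p in P.  Conversely, write
   f = q / a with q in Z[X] and split a = s t, where s is the part of a prime
   to P.  Then f = s^-1 (q / t), and q / t lies in R: at a prime of P it is
   s f, at any other prime it is an integral polynomial divided by a unit. *)

Section Char0Field.
Variable F : fieldType.
Hypothesis F0 : [pchar F] =i pred0.

Lemma pchar0_intr_eq0 (n : int) : (n%:~R == 0 :> F) = (n == 0).
Proof.
have natF_eq0 := (pcharf0P F).1 F0.
by case: n => m; rewrite ?NegzE ?intrN ?oppr_eq0 -pmulrn natF_eq0.
Qed.

Lemma pchar0_ratr_frac (n d : int) :
  d != 0 -> ratr (n%:~R / d%:~R) = n%:~R / d%:~R :> F.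
Proof.
move=> d0; set x := n%:~R / d%:~R.
have cross : numq x * d = n * denq x.
  by apply: (@intr_inj rat); rewrite !intrM numqE mulrAC divfK ?intr_eq0.
apply/eqP; rewrite eqr_div ?pchar0_intr_eq0 ?denq_neq0 //.
by rewrite -!intrM cross.
Qed.

Lemma pchar0_ratrM (x y : rat) : ratr (x * y) = ratr x * ratr y :> F.
Proof.
rewrite -[x]divq_num_den -[y]divq_num_den mulf_div -!intrM.
by rewrite !pchar0_ratr_frac ?mulf_neq0 ?denq_neq0 // !intrM mulf_div.
Qed.

Lemma pchar0_ratr_eq0 (x : rat) : (ratr x == 0 :> F) = (x == 0).
Proof.
rewrite mulf_eq0 invr_eq0 !pchar0_intr_eq0 numq_eq0.
by rewrite (negPf (denq_neq0 x)) orbF.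
Qed.

Lemma pchar0_map_ratrZ (c : rat) (g : {poly rat}) :
  map_poly (@ratr F) (c *: g) = ratr c *: map_poly ratr g.
Proof.
have ratr0 : ratr 0 = 0 :> F by exact: ratr_int 0.
by apply/polyP=> i; rewrite coefZ !coef_map_id0 // coefZ pchar0_ratrM.
Qed.

End Char0Field.

Lemma padic_val_int p (n : int) : padic_val p n%:~R = (logn p `|n|)%:Z.
Proof. by rewrite /padic_val numq_int denq_int logn1 subr0. Qed.

Section PadicClosure.
Variables (p : nat) (K : closedFieldType) (v : K -> rat).
Hypothesis Hv : is_padic_closure p v.

Let K0 : [pchar K] =i pred0. Proof. by case: Hv. Qed.

Let vM x y : x != 0 -> y != 0 -> v (x * y) = v x + v y.
Proof. by case: Hv => _ vM _ _; apply: vM. Qed.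

Let v_ratr q : q != 0 -> v (ratr q) = (padic_val p q)%:~R.
Proof. by case: Hv => _ _ _ v_ratr; apply: v_ratr. Qed.

Lemma ZbarM x y : Zbar v x -> Zbar v y -> Zbar v (x * y).
Proof.
case=> [->|vx]; first by rewrite mul0r; left.
case=> [->|vy]; first by rewrite mulr0; left.
have [->|x0] := eqVneq x 0; first by rewrite mul0r; left.
have [->|y0] := eqVneq y 0; first by rewrite mulr0; left.
by right; rewrite vM // addr_ge0.
Qed.

Lemma ZbarD x y : Zbar v x -> Zbar v y -> Zbar v (x + y).
Proof.
case=> [->|vx]; first by rewrite add0r.
case=> [->|vy]; first by rewrite addr0; right.
have [->|x0] := eqVneq x 0; first by rewrite add0r; right.
have [->|y0] := eqVneq y 0; first by rewrite addr0; right.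
have [->|xy0] := eqVneq (x + y) 0; first by left.
right; case: Hv => _ _ v_min _; apply: le_trans (v_min _ _ x0 y0 xy0).
by rewrite le_min vx vy.
Qed.

Lemma Zbar_int (n : int) : Zbar v n%:~R.
Proof.
have [->|n0] := eqVneq n 0; first by left.
by right; rewrite -(ratr_int K) v_ratr ?intr_eq0 // padic_val_int ler0z.
Qed.

Lemma Zbar_horner (q : {poly K}) a :
  (forall i, Zbar v q`_i) -> Zbar v a -> Zbar v q.[a].
Proof.
move=> Zq Za; rewrite horner_coef; apply: (big_ind (Zbar v)); first by left.
  exact: ZbarD.
move=> i _; apply: ZbarM => //; elim: (nat_of_ord i) => [|k IHk].
  by rewrite expr0; exact: (Zbar_int 1).
by rewrite exprS; apply: ZbarM.
Qed.

Lemma Zbar_ratr_invz (s : int) : ~~ (p%:Z %| s)%Z -> Zbar v (ratr s%:~R^-1).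
Proof.
rewrite dvdzE /= => p_ndvd_s.
have sQ0 : s%:~R != 0 :> rat.
  by rewrite intr_eq0; apply: contraNneq p_ndvd_s => ->; exact: dvdn0.
have v_s : v (ratr s%:~R) = 0.
  rewrite v_ratr // padic_val_int; apply/eqP; rewrite intr_eq0 eqz_nat eqn0Ngt.
  by rewrite logn_gt0 mem_primes (negPf p_ndvd_s) !andbF.
have ratr1 : ratr 1 = 1 :> K := ratr_int K 1.
have v1 : v 1 = 0.
  by rewrite -[1 in LHS](ratr_int K 1) v_ratr ?oner_eq0 // padic_val_int logn1.
have v_sV : v (ratr s%:~R^-1) = 0.
  have := congr1 v (pchar0_ratrM K0 s%:~R^-1 s%:~R).
  by rewrite mulVf // ratr1 v1 vM ?pchar0_ratr_eq0 ?invr_eq0 // v_s addr0.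
by right; rewrite v_sV.
Qed.

Lemma IntQ_scale_int (E : K -> Prop) (s : int) f :
  IntQ v E f -> IntQ v E (s%:~R *: f).
Proof.
move=> Ef a Ea; rewrite pchar0_map_ratrZ // hornerZ ratr_int.
exact: ZbarM (Zbar_int s) (Ef a Ea).
Qed.

Lemma IntQ_scale_invz (E : K -> Prop) (s : int) f :
  ~~ (p%:Z %| s)%Z -> IntQ v E f -> IntQ v E (s%:~R^-1 *: f).
Proof.
move=> p_ndvd_s Ef a Ea; rewrite pchar0_map_ratrZ // hornerZ.
exact: ZbarM (Zbar_ratr_invz p_ndvd_s) (Ef a Ea).
Qed.

Lemma IntQ_int_poly (E : K -> Prop) (q : {poly int}) :
  (forall a, E a -> Zbar v a) -> IntQ v E (map_poly intr q).
Proof.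
move=> EZ a Ea; apply: Zbar_horner (EZ a Ea) => i.
by rewrite !coef_map_id0 ?(ratr_int K 0) // ratr_int; exact: Zbar_int.
Qed.

End PadicClosure.

Lemma genSP (P : seq nat) (s : int) :
  genS P s <-> exists2 m : nat, s = m%:Z & [predC P].-nat m.
Proof.
split=> [[l [l_primes ->]] | [m -> m_pi]].
  exists (\prod_(q <- l) q)%N => //; elim: l l_primes => [|q l IHl] /=.
    by rewrite big_nil.
  case/andP=> /andP[q_prime qP] /IHl l_pi.
  by rewrite big_cons pnatM pnatE // inE qP.
elim/ltn_ind: m m_pi => m IHm m_pi.
have [m_le1 | m_gt1] := leqP m 1.
  exists [::]; rewrite big_nil; split=> //; congr Posz; apply/eqP.
  by rewrite eqn_leq m_le1; case/andP: m_pi.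
have pdiv_dvd_m := pdiv_dvd m; have pdiv_pr := pdiv_prime m_gt1.
have lt_div : (m %/ pdiv m < m)%N by rewrite ltn_Pdiv ?prime_gt1 // ltnW.
have [l [l_primes [l_prod]]] := IHm _ lt_div (pnat_div pdiv_dvd_m m_pi).
exists (pdiv m :: l); rewrite big_cons /= pdiv_pr l_primes andbT; split.
  by have := pnat_dvd pdiv_dvd_m m_pi; rewrite pnatE // inE.
by congr Posz; rewrite -l_prod mulnC divnK.
Qed.

Lemma genS_ndvd (P : seq nat) p s :
  prime p -> p \in P -> genS P s -> ~~ (p%:Z %| s)%Z.
Proof.
move=> p_pr pP /genSP[m -> m_pi]; rewrite dvdzE /=.
apply/negP=> /pnat_dvd/(_ m_pi).
by rewrite pnatE // inE pP.
Qed.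

Lemma localize_sub (S S' : int -> Prop) A f :
  (forall s, S s -> S' s) -> localize S A f -> localize S' A f.
Proof. by move=> SS' [s [g [Ss Ag ->]]]; exists s, g; split=> //; exact: SS'.
Qed.

Section PadicClosureFamily.
Variables (K : nat -> closedFieldType) (v : forall p, K p -> rat).
Variable E : forall p, K p -> Prop.
Arguments v : clear implicits.
Arguments E : clear implicits.
Hypothesis Hv : forall p, prime p -> is_padic_closure p (v p).

Lemma IntQ_of_localize (S : int -> Prop) p f :
  prime p -> (forall s, S s -> ~~ (p%:Z %| s)%Z) ->
  localize S (IntQhat v E) f -> IntQ (v p) (E p) f.
Proof.
move=> p_pr S_ndvd [s [g [Ss Eg ->]]].
exact: IntQ_scale_invz (Hv p_pr) _ _ _ (S_ndvd s Ss) (Eg p p_pr).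
Qed.

Hypothesis HE : forall p, prime p -> forall a, E p a -> Zbar (v p) a.

Lemma localize_genS_of_IntQ (P : seq nat) f :
  (forall p, p \in P -> IntQ (v p) (E p) f) ->
  localize (genS P) (IntQhat v E) f.
Proof.
move=> Ef; have [q [a a0 f_def]] := rat_poly_scale f.
pose pi := [predC P]; pose n := `|a|%N.
have n_gt0 : (0 < n)%N by rewrite absz_gt0.
pose s := (n`_pi)%:Z; pose t := sgz a * (n`_pi^')%:Z.
have a_st : a = s * t.
  by rewrite {1}[a]intEsg -/n -(partnC pi n_gt0) PoszM mulrCA.
have s0 : s%:~R != 0 :> rat by rewrite intr_eq0 eqz_nat -lt0n part_gt0.
exists s, (t%:~R^-1 *: map_poly intr q); split.
- by apply/genSP; exists (n`_pi)%N; last exact: part_pnat.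
- move=> r r_pr; have [rP | rNP] := boolP (r \in P).
    have -> : t%:~R^-1 *: map_poly intr q = s%:~R *: f.
      by rewrite f_def scalerA a_st intrM invfM mulVKf.
    exact: IntQ_scale_int (Hv r_pr) _ _ _ (Ef r rP).
  have r_ndvd_t : ~~ (r%:Z %| t)%Z.
    have abs_t : `|t|%N = (n`_pi^')%N.
      by rewrite abszM /sgz (negPf a0); case: (a < 0); rewrite /= mul1n.
    rewrite dvdzE abs_t; apply/negP=> /pnat_dvd/(_ (part_pnat _ _)).
    by rewrite pnatE // !inE rNP.
  apply: IntQ_scale_invz (Hv r_pr) _ _ _ r_ndvd_t _.
  exact: (IntQ_int_poly (Hv r_pr) _ (HE r_pr)).
- by rewrite f_def scalerA -invfM -rmorphM -a_st.
Qed.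

End PadicClosureFamily.

Theorem mainTheorem1
  (K : nat -> closedFieldType) (v : forall p : nat, K p -> rat)
  (Hv : forall p : nat, prime p -> is_padic_closure p (v p))
  (E : forall p : nat, K p -> Prop)
  (HE : forall p : nat, prime p -> forall a : K p, E p a -> Zbar (v p) a)
  (P : seq nat) (HP : all prime P) :
  (forall f : {poly rat},
     localize (genS P) (IntQhat v E) f <->
     (forall p : nat, p \in P -> IntQ (v p) (E p) f))
  /\
  (forall p : nat, prime p -> forall f : {poly rat},
     localize (fun s : int => ~~ (p%:Z %| s)%Z) (IntQhat v E) f <->
     IntQ (v p) (E p) f).
Proof.
split=> [f | p p_pr f]; split.
- move=> Sf p pP; have p_pr := allP HP p pP.
  by apply: (IntQ_of_localize Hv p_pr _ Sf) => s; apply: genS_ndvd.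
- move=> Ef; exact: (localize_genS_of_IntQ Hv HE Ef).
- by move=> Sf; apply: (IntQ_of_localize Hv p_pr _ Sf).
- move=> Ef; apply: localize_sub (localize_genS_of_IntQ Hv HE (P := [:: p]) _).
    by move=> s; apply: genS_ndvd p_pr (mem_head p [::]).
  by move=> q; rewrite inE => /eqP ->.
Qed.
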